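(* Let $(\mathbf{X}^0,\mathbf{p})$ be a pEF1 $\{1,k\}$-payment equilibrium that is not $(2-1/k)$-pEFX. Then there exists an integer $z<k$ such that $p(X^0_j)\in\{z,z+1\}$ for every agent $j\in N_L$, and $p(X^0_i)\in[k,k+z]$ for every agent $i\in N_H$.
   Context: Fix $k>1$. Agents $N$, chores $M$, additive costs $c_i(e)\in\{1,k\}$. An allocation partitions $M$ into bundles. A payment vector assigns $p(e)>0$, $p(X)=\sum_{e\in X}p(e)$; $\alpha_{i,e}=c_i(e)/p(e)$, $\alpha_i=\min_e\alpha_{i,e}$, $\mathsf{MPB}_i=\{e:\alpha_{i,e}=\alpha_i\}$; $(\mathbf{X},\mathbf{p})$ is a $\{1,k\}$-payment equilibrium if $X_i\subseteq\mathsf{MPB}_i$ for all $i$ and $p(e)\in\{1,k\}$ for all $e$. It is pEF1 if for all $i,j$, $X_i=\emptyset$ or some $e\in X_i$ has $p(X_i\setminus\{e\})\le p(X_j)$; it is $\beta$-pEFX if for all $i,j$, $X_i=\emptyset$ or $p(X_i\setminus\{e\})\le\beta\,p(X_j)$ for all $e\in X_i$. $L=\{e:p(e)=1\}$, $H=\{e:p(e)=k\}$, $N_L=\{i:X^0_i\subseteq L\}$, $N_H=\{i:|X^0_i\cap H|\ge1\}$. *)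

From mathcomp Require Import all_boot all_order all_algebra.
Set Implicit Arguments. Unset Strict Implicit. Unset Printing Implicit Defensive.
Import Order.TTheory GRing.Theory Num.Theory.
Local Open Scope ring_scope.

Section Defs.
Variables (R : realFieldType) (N M : finType).

Definition is_allocation (X : N -> {set M}) : Prop :=
  (forall i j, i != j -> [disjoint X i & X j]) /\
  (forall e : M, exists i, e \in X i).

Definition pay (p : M -> R) (S : {set M}) : R := \sum_(e in S) p e.

Definition alpha (c : N -> M -> R) (p : M -> R) (i : N) (e : M) : R := c i e / p e.

Definition in_MPB (c : N -> M -> R) (p : M -> R) (i : N) (e : M) : Prop :=
  forall e' : M, alpha c p i e <= alpha c p i e'.

Definition payment_equilibrium_1k (k : R) (c : N -> M -> R)
    (X : N -> {set M}) (p : M -> R) : Prop :=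
  (forall e, 0 < p e) /\
  (forall i e, e \in X i -> in_MPB c p i e) /\
  (forall e, p e = 1 \/ p e = k).

Definition pEF1 (X : N -> {set M}) (p : M -> R) : Prop :=
  forall i j, X i = set0 \/ exists2 e, e \in X i & pay p (X i :\ e) <= pay p (X j).

Definition pEFX (beta : R) (X : N -> {set M}) (p : M -> R) : Prop :=
  forall i j, X i = set0 \/
    forall e, e \in X i -> pay p (X i :\ e) <= beta * pay p (X j).

Definition Lset (p : M -> R) : {set M} := [set e | p e == 1].
Definition Hset (k : R) (p : M -> R) : {set M} := [set e | p e == k].
Definition N_L (X : N -> {set M}) (p : M -> R) : {set N} :=
  [set i | X i \subset Lset p].
Definition N_H (k : R) (X : N -> {set M}) (p : M -> R) : {set N} :=
  [set i | 1 <= #|X i :&: Hset k p|]%N.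
End Defs.

From mathcomp Require Import all_boot all_order all_algebra.
From mathcomp Require Import zify lra.
Set Implicit Arguments. Unset Strict Implicit. Unset Printing Implicit Defensive.
Import Order.TTheory GRing.Theory Num.Theory.
Local Open Scope ring_scope.

(* If every bundle is paid at least k, pEF1 already gives (2 - 1/k)-pEFX:
   removing a chore of payment k instead of the pEF1 chore costs nothing, and
   removing a chore of payment 1 costs at most k - 1 <= (1 - 1/k) p(X_j).
   So some bundle is paid less than k; a bundle of minimum payment then
   consists of chores of payment 1, and its size z pins down all other
   payments through pEF1 towards it. *)

Section Pay.
Variables (R : realFieldType) (M : finType) (p : M -> R).

Lemma pay_setD1 (S : {set M}) e : e \in S -> pay p S = p e + pay p (S :\ e).
Proof. by move=> eS; rewrite /pay (big_setD1 e eS). Qed.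

Lemma pay_cardE (S : {set M}) : {in S, forall e, p e = 1} -> pay p S = #|S|%:R.
Proof. by move=> S1; rewrite /pay (eq_bigr (fun=> 1)) ?sumr_const. Qed.

Lemma pay_N_L_near_min (N : finType) (X : N -> {set M}) (a j : N) :
  pEF1 X p -> (forall i, pay p (X a) <= pay p (X i)) ->
  {in X a, forall e, p e = 1} -> j \in N_L X p ->
  pay p (X j) = pay p (X a) \/ pay p (X j) = pay p (X a) + 1.
Proof.
move=> ef1 a_min a_unit; rewrite inE => /subsetP XjL.
have j_unit : {in X j, forall e, p e = 1}.
  by move=> e /XjL; rewrite inE => /eqP.
have low : (#|X a| <= #|X j|)%N.
  by rewrite -(ler_nat R) -(pay_cardE j_unit) -(pay_cardE a_unit).
have up : (#|X j| <= #|X a|.+1)%N.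
  case: (ef1 j a) => [-> | [e eX He]]; first by rewrite cards0.
  rewrite -(ler_nat R) -[#|X a|.+1%:R]natr1.
  rewrite -(pay_cardE j_unit) -(pay_cardE a_unit).
  by have := pay_setD1 eX; rewrite j_unit //; lra.
rewrite (pay_cardE j_unit) (pay_cardE a_unit) natr1.
have [->|->] : (#|X j| = #|X a| \/ #|X j| = #|X a|.+1)%N by lia.
  by left.
by right.
Qed.

End Pay.

Section OneOrKPayments.
Variables (R : realFieldType) (k : R) (M : finType) (p : M -> R).
Hypotheses (k_gt1 : 1 < k) (p1k : forall e, p e = 1 \/ p e = k).

Lemma payment_gt0 e : 0 < p e.
Proof. by have := k_gt1; case: (p1k e) => ->; lra. Qed.

Lemma payment_le_k e : p e <= k.
Proof. by have := k_gt1; case: (p1k e) => ->; lra. Qed.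

Lemma pay_ge0 (S : {set M}) : 0 <= pay p S.
Proof. by apply: sumr_ge0 => e _; apply/ltW/payment_gt0. Qed.

Lemma payment_le_pay (S : {set M}) e : e \in S -> p e <= pay p S.
Proof. by move=> eS; rewrite (pay_setD1 p eS) lerDl pay_ge0. Qed.

Lemma pay_lt_k_unit_payments (S : {set M}) :
  pay p S < k -> {in S, forall e, p e = 1}.
Proof.
move=> Sk e eS; case: (p1k e) => // pe.
by have := payment_le_pay eS; rewrite pe; lra.
Qed.

Lemma pEFX_pair_of_pay_ge_k (S T : {set M}) e' e :
  e' \in S -> pay p (S :\ e') <= pay p T -> k <= pay p T ->
  e \in S -> pay p (S :\ e) <= (2 - 1 / k) * pay p T.
Proof.
move=> e'S ef1 kT eS.
have k_gt0 : 0 < k by apply: lt_trans k_gt1.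
have slack : k - 1 <= (1 - 1 / k) * pay p T.
  have -> : k - 1 = (1 - 1 / k) * k by rewrite mulrBl !mul1r mulVf ?gt_eqF.
  by apply: ler_wpM2l; rewrite // subr_ge0 ler_pdivrMr // mul1r ltW.
have -> : (2 - 1 / k) * pay p T = pay p T + (1 - 1 / k) * pay p T.
  by rewrite mulrBl mulrDl !mul1r mulrBl mul1r addrA.
have := k_gt1; have := payment_le_k e'.
have := pay_setD1 p e'S; have := pay_setD1 p eS.
by case: (p1k e) => ->; lra.
Qed.

Lemma pEFX_of_pEF1_pay_ge_k (N : finType) (X : N -> {set M}) :
  pEF1 X p -> (forall j, k <= pay p (X j)) -> pEFX (2 - 1 / k) X p.
Proof.
move=> ef1 Xk i j; case: (ef1 i j) => [|[e' e'X He']]; first by left.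
by right=> e eX; apply: pEFX_pair_of_pay_ge_k e'X He' (Xk j) eX.
Qed.

Lemma exists_pay_lt_k (N : finType) (X : N -> {set M}) :
  pEF1 X p -> ~ pEFX (2 - 1 / k) X p -> exists j, pay p (X j) < k.
Proof.
move=> ef1 not_efx; case: (pickP (fun j => pay p (X j) < k)) => [j Xj|none].
  by exists j.
by case: not_efx; apply: pEFX_of_pEF1_pay_ge_k => // j; rewrite leNgt none.
Qed.

Lemma pay_N_H_le (N : finType) (X : N -> {set M}) (a i : N) :
  pEF1 X p -> i \in N_H k X p -> k <= pay p (X i) <= k + pay p (X a).
Proof.
move=> ef1; rewrite inE card_gt0 => /set0Pn[f]; rewrite !inE => /andP[fX /eqP pf].
have -> /= : k <= pay p (X i) by rewrite -pf payment_le_pay.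
case: (ef1 i a) => [Xi0 | [e eX He]]; first by rewrite Xi0 inE in fX.
by have := pay_setD1 p eX; have := payment_le_k e; lra.
Qed.

End OneOrKPayments.

Theorem corollary2 (R : realFieldType) (k : R) (N M : finType)
    (c : N -> M -> R) (X : N -> {set M}) (p : M -> R) :
  1 < k ->
  (forall i e, c i e = 1 \/ c i e = k) ->
  is_allocation X ->
  payment_equilibrium_1k k c X p ->
  pEF1 X p ->
  ~ pEFX (2 - 1 / k) X p ->
  exists z : int,
    z%:~R < k /\
    (forall j, j \in N_L X p -> pay p (X j) = z%:~R \/ pay p (X j) = z%:~R + 1) /\
    (forall i, i \in N_H k X p -> k <= pay p (X i) <= k + z%:~R).
Proof.
move=> k_gt1 _ _ [_ [_ p1k]] ef1 not_efx.
have [j0 Xj0_lt_k] := exists_pay_lt_k k_gt1 p1k ef1 not_efx.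
have [a _ a_min] := arg_minP (fun i => pay p (X i)) (isT : xpredT j0).
have {}a_min i : pay p (X a) <= pay p (X i) by apply: a_min.
have a_unit : {in X a, forall e, p e = 1}.
  by apply: (pay_lt_k_unit_payments k_gt1 p1k); apply: le_lt_trans Xj0_lt_k.
exists #|X a|%:Z; rewrite -pmulrn -(pay_cardE a_unit).
split; [exact: le_lt_trans Xj0_lt_k | split => i].
- exact: pay_N_L_near_min.
- exact: pay_N_H_le.
Qed.
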